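(* Let $\mathsf V$ be a variety and $h:\mathbf F_{\mathsf V}(z)\to\prod_{k=1}^m\mathbf E_k$ an algebraic e-generalization problem. Then: (1) if the type of $\mathscr G(h)$ is nullary or infinitary, then the e-generalization type of $h$ is at best infinitary (i.e., infinitary or nullary); (2) if the type of $\mathscr G(h)$ is finitary, then the e-generalization type of $h$ is at best finitary (i.e., not unitary).
   Context: $\mathbf F_{\mathsf V}(z)$ is the free algebra of the variety $\mathsf V$ on one generator $z$. An algebra is projective in $\mathsf V$ iff it is a retract of a free algebra; exact if isomorphic to a finitely generated subalgebra of a finitely generated free algebra of $\mathsf V$. An algebraic e-generalization problem is a homomorphism $h:\mathbf F_{\mathsf V}(z)\to\prod_{k=1}^m\mathbf E_k$ with each $\mathbf E_k$ 1-generated exact and each $p_k\circ h$ surjective. A solution of $h$ is a homomorphism $g:\mathbf F_{\mathsf V}(z)\to\mathbf P$, $\mathbf P$ finitely generated projective, with $f\circ g=h$ for some homomorphism $f$. For homomorphisms with common domain, $g\sqsubseteq g'$ iff $f\circ g'=g$ for some homomorphism $f$; $(\mathscr A(h),\sqsubseteq)$ is the poset of solutions modulo $\sqsubseteq$-equivalence. A minimal complete set in a poset is a set $M$ of pairwise incomparable elements such that every element is above some element of $M$; the e-generalization type of $h$ is unitary/finitary/infinitary/nullary if $(\mathscr A(h),\sqsubseteq)$ has a minimal complete set of cardinality 1 / finite cardinality $>1$ / infinite cardinality / has none (best to worst in this order). $\mathscr G(h)=\{\ker(g): g\text{ a solution of }h\}$, ordered by inclusion. A maximal complete set of congruences in $(\mathscr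 G(h),\subseteq)$ is a set $M\subseteq\mathscr G(h)$ of pairwise incomparable congruences such that every element of $\mathscr G(h)$ is contained in some element of $M$. The type of $\mathscr G(h)$ is unitary/finitary/infinitary/nullary if there is such an $M$ of cardinality 1 / finite cardinality $>1$ / infinite cardinality / there is none. *)

From mathcomp Require Import all_boot.
From Stdlib Require List.

Set Implicit Arguments.
Unset Strict Implicit.
Unset Printing Implicit Defensive.

Record signature := Signature { op : Type; arity : op -> nat }.

Record algebra (S : signature) := Algebra {
  carrier :> Type;
  interp : forall o : op S, ('I_(arity o) -> carrier) -> carrier }.
Arguments interp {S} a o _ : rename.

Inductive term (S : signature) (X : Type) : Type :=
  | Var : X -> term S X
  | App : forall o : op S, ('I_(arity o) -> term S X) -> term S X.

Fixpoint eval (S : signature) (X : Type) (A : algebra S) (v : X -> A)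
    (t : term S X) : A :=
  match t with
  | Var x => v x
  | App o args => interp A o (fun i => eval v (args i))
  end.

(* A variety is an equationally defined class of algebras (Birkhoff). *)
Record variety (S : signature) := Variety {
  identities : term S nat -> term S nat -> Prop }.

Definition in_V (S : signature) (V : variety S) (A : algebra S) : Prop :=
  forall l r, identities V l r -> forall v : nat -> A, eval v l = eval v r.

Definition is_hom (S : signature) (A B : algebra S) (f : A -> B) : Prop :=
  forall (o : op S) (args : 'I_(arity o) -> A),
    f (interp A o args) = interp B o (fun i => f (args i)).
Arguments is_hom {S} A B f.

Definition is_free (S : signature) (V : variety S) (X : Type) (F : algebra S)
    (gen : X -> F) : Prop :=
  in_V V F /\
  forall (A : algebra S), in_V V A -> forall a : X -> A,
    (exists f : F -> A, is_hom F A f /\ forall x, f (gen x) = a x) /\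
    (forall f1 f2 : F -> A, is_hom F A f1 -> is_hom F A f2 ->
       (forall x, f1 (gen x) = f2 (gen x)) -> forall y, f1 y = f2 y).

Inductive gen_by (S : signature) (A : algebra S) (G : A -> Prop) : A -> Prop :=
  | gen_by_in : forall x, G x -> gen_by G x
  | gen_by_op : forall (o : op S) (args : 'I_(arity o) -> A),
      (forall i, gen_by G (args i)) -> gen_by G (interp A o args).

Definition finitely_generated (S : signature) (A : algebra S) : Prop :=
  exists s : seq A, forall x : A, gen_by (fun y => List.In y s) x.

Definition one_generated (S : signature) (A : algebra S) : Prop :=
  exists a : A, forall x : A, gen_by (fun y => y = a) x.

Definition projective (S : signature) (V : variety S) (P : algebra S) : Prop :=
  exists (X : Type) (F : algebra S) (gen : X -> F), is_free V gen /\
  exists (r : F -> P) (s : P -> F),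
    is_hom F P r /\ is_hom P F s /\ forall p, r (s p) = p.

Definition fg_projective (S : signature) (V : variety S) (P : algebra S) :=
  finitely_generated P /\ projective V P.

(* Exact: isomorphic to a finitely generated subalgebra of a finitely
   generated free algebra of V (i.e. f.g. and injectively embeddable). *)
Definition exact (S : signature) (V : variety S) (E : algebra S) : Prop :=
  exists (n : nat) (Fn : algebra S) (gen : 'I_n -> Fn), is_free V gen /\
  finitely_generated E /\
  exists e : E -> Fn, is_hom E Fn e /\ injective e.

Definition prod_alg (S : signature) (m : nat) (E : 'I_m -> algebra S)
  : algebra S :=
  @Algebra S (forall k : 'I_m, E k)
    (fun o args => fun k => interp (E k) o (fun i => args i k)).

Definition cand (S : signature) (F : algebra S) := {P : algebra S & F -> P}.

Definition is_solution (S : signature) (V : variety S) (F : algebra S)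
    (m : nat) (E : 'I_m -> algebra S) (h : F -> prod_alg E)
    (s : cand F) : Prop :=
  fg_projective V (projT1 s) /\ is_hom F (projT1 s) (projT2 s) /\
  exists f : projT1 s -> prod_alg E,
    is_hom (projT1 s) (prod_alg E) f /\ forall x, f (projT2 s x) = h x.

Definition sol_le (S : signature) (F : algebra S) (s s' : cand F) : Prop :=
  exists f : projT1 s' -> projT1 s,
    is_hom (projT1 s') (projT1 s) f /\ forall x, f (projT2 s' x) = projT2 s x.

Definition kernel (S : signature) (F : algebra S) (s : cand F) : F -> F -> Prop :=
  fun x y => projT2 s x = projT2 s y.

Definition Gh (S : signature) (V : variety S) (F : algebra S)
    (m : nat) (E : 'I_m -> algebra S) (h : F -> prod_alg E)
    (R : F -> F -> Prop) : Prop :=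
  exists s : cand F, is_solution V h s /\ R = kernel s.

Definition subrel (T : Type) (R1 R2 : T -> T -> Prop) : Prop :=
  forall x y, R1 x y -> R2 x y.

Definition min_complete (T : Type) (D : T -> Prop) (le : T -> T -> Prop)
    (M : T -> Prop) : Prop :=
  (forall x, M x -> D x) /\
  (forall x y, M x -> M y -> le x y -> x = y) /\
  (forall x, D x -> exists m, M m /\ le m x).

Definition card_one (T : Type) (M : T -> Prop) : Prop :=
  exists x, forall y, M y <-> y = x.

Definition card_finite (T : Type) (M : T -> Prop) : Prop :=
  exists s : seq T, List.NoDup s /\ forall y, M y <-> List.In y s.

Definition card_finite_gt1 (T : Type) (M : T -> Prop) : Prop :=
  exists s : seq T, List.NoDup s /\ 1 < size s /\ forall y, M y <-> List.In y s.

Inductive unif_type := Unitary | Finitary | Infinitary | Nullary.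

Definition has_type (T : Type) (D : T -> Prop) (le : T -> T -> Prop)
    (t : unif_type) : Prop :=
  match t with
  | Unitary => exists M, min_complete D le M /\ card_one M
  | Finitary => exists M, min_complete D le M /\ card_finite_gt1 M
  | Infinitary => exists M, min_complete D le M /\ ~ card_finite M
  | Nullary => ~ exists M, min_complete D le M
  end.

Definition egen_type (S : signature) (V : variety S) (F : algebra S)
    (m : nat) (E : 'I_m -> algebra S) (h : F -> prod_alg E) (t : unif_type) :=
  has_type (is_solution V h) (@sol_le S F) t.

(* Type of (G(h), ⊆) w.r.t. maximal complete sets: minimal complete sets
   for the reversed inclusion order. *)
Definition G_type (S : signature) (V : variety S) (F : algebra S)
    (m : nat) (E : 'I_m -> algebra S) (h : F -> prod_alg E) (t : unif_type) :=
  has_type (Gh V h) (fun R1 R2 => subrel R2 R1) t.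

Definition egen_problem (S : signature) (V : variety S) (F : algebra S)
    (m : nat) (E : 'I_m -> algebra S) (h : F -> prod_alg E) : Prop :=
  is_hom F (prod_alg E) h /\
  (forall k, one_generated (E k) /\ exact V (E k)) /\
  (forall k (y : E k), exists x, h x k = y).

From Pilot Require Import Defs.
From mathcomp Require Import all_boot.
From Stdlib Require Import Classical ClassicalEpsilon.
From Stdlib Require Import FunctionalExtensionality PropExtensionality.
From Stdlib Require List Relation_Definitions.

Set Implicit Arguments.
Unset Strict Implicit.
Unset Printing Implicit Defensive.

(* Taking kernels is an order-reversing map from (A(h), ⊑) onto (G(h), ⊆).
   Hence a finite minimal complete set of solutions yields a finite cofinal
   family of kernels, whose maximal members form a finite maximal complete
   set of G(h); such sets are unique in a partial order, so G(h) is then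
   neither nullary nor infinitary.  Likewise, a single most general solution
   has the greatest kernel in G(h), which rules out G(h) being finitary. *)

Lemma card_finite_of_sub_list (T : Type) (P : T -> Prop) (s : seq T) :
  (forall y, P y -> List.In y s) -> card_finite P.
Proof.
move=> sub_s.
pose dec_eq (x y : T) := excluded_middle_informative (x = y).
pose in_P y := if excluded_middle_informative (P y) then true else false.
exists (List.filter in_P (List.nodup dec_eq s)); split.
  exact/List.NoDup_filter/List.NoDup_nodup.
move=> y; rewrite List.filter_In List.nodup_In /in_P.
by case: excluded_middle_informative => Py; split=> [|[]]; auto.
Qed.

Section MinimalCompleteSets.

Variables (T : Type) (D : T -> Prop) (le : T -> T -> Prop).
Hypothesis le_preorder : Relation_Definitions.preorder T le.

Let le_refl : forall x, le x x :=
  Relation_Definitions.preord_refl T le le_preorder.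
Let le_trans : forall x y z, le x y -> le y z -> le x z :=
  Relation_Definitions.preord_trans T le le_preorder.
Arguments le_trans {x y z}.

Definition minimal_in (K : seq T) (y : T) : Prop :=
  List.In y K /\ forall z, List.In z K -> le z y -> le y z.

Lemma minimal_below_in_list (K : seq T) (x : T) :
  List.In x K -> exists y, minimal_in K y /\ le y x.
Proof.
elim: K x => [//|a K IH] x.
have min_below_a : exists y, minimal_in (a :: K) y /\ le y a.
  case: (classic (exists z, List.In z K /\ le z a /\ ~ le a z)).
  - move=> [z [Kz [za Naz]]]; have [y [[Ky y_min] yz]] := IH z Kz.
    exists y; split; last exact: le_trans yz za.
    split; first by right.
    move=> w [<-|Kw] wy; last exact: y_min.
    by case: Naz; apply: le_trans wy yz.
  - move=> no_below_a; exists a; split; last exact: le_refl.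
    split; first by left.
    move=> w [<-|Kw] wa //.
    by apply: NNPP => Naw; apply: no_below_a; exists w.
move=> [<-|Kx]; first exact: min_below_a.
have [y [[Ky y_min] yx]] := IH x Kx.
case: (classic (le a y /\ ~ le y a)) => [[ay _]|not_a_below_y].
  have [y' [y'_min y'a]] := min_below_a.
  by exists y'; split=> //; apply: le_trans y'a (le_trans ay yx).
exists y; split=> //; split; first by right.
move=> w [<-|Kw] wy; last exact: y_min.
by apply: NNPP => Nyw; apply: not_a_below_y.
Qed.

Lemma min_complete_subsingleton_of_least (x0 : T) (M : T -> Prop) :
  D x0 -> (forall y, D y -> le x0 y) -> min_complete D le M ->
  forall a b, M a -> M b -> a = b.
Proof.
move=> Dx0 x0_least [MD [M_incomp M_compl]].
have [m [Mm mx0]] := M_compl x0 Dx0.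
have eq_m a : M a -> a = m.
  move=> Ma; symmetry.
  by apply: M_incomp Mm Ma (le_trans mx0 (x0_least a (MD a Ma))).
by move=> a b /eq_m -> /eq_m ->.
Qed.

Lemma least_not_finitary (x0 : T) :
  D x0 -> (forall y, D y -> le x0 y) -> ~ has_type D le Finitary.
Proof.
move=> Dx0 x0_least [M [M_mc [[|a [|b s]] [nodup [size_gt1 M_s]]]]] //.
have ab : a = b.
  by apply: (min_complete_subsingleton_of_least Dx0 x0_least M_mc); apply/M_s;
    [left | right; left].
by move: nodup; rewrite ab => /List.NoDup_cons_iff [[]]; left.
Qed.

Hypothesis le_antisym : Relation_Definitions.antisymmetric T le.

Lemma min_complete_of_cofinal_list (K : seq T) :
  (forall x, List.In x K -> D x) ->
  (forall x, D x -> exists y, List.In y K /\ le y x) ->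
  exists M, min_complete D le M /\ card_finite M.
Proof.
move=> K_D K_cofinal; exists (minimal_in K); split; last first.
  by apply: (card_finite_of_sub_list (s := K)) => y [].
split; first by move=> x [/K_D].
split.
  by move=> x y [Kx _] [Ky y_min] xy; apply: le_antisym xy (y_min x Kx xy).
move=> x /K_cofinal [y [Ky yx]].
have [y' [y'_min y'y]] := minimal_below_in_list Ky.
by exists y'; split=> //; apply: le_trans y'y yx.
Qed.

Lemma min_complete_unique (M1 M2 : T -> Prop) :
  min_complete D le M1 -> min_complete D le M2 -> M1 = M2.
Proof.
suff sub N1 N2 : min_complete D le N1 -> min_complete D le N2 ->
    forall y, N1 y -> N2 y.
  move=> mc1 mc2; apply: functional_extensionality => y.
  by apply: propositional_extensionality; split; apply: sub.
move=> [N1D [N1_incomp N1_compl]] [N2D [_ N2_compl]] y N1y.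
have [y2 [N2y2 y2y]] := N2_compl y (N1D y N1y).
have [y1 [N1y1 y1y2]] := N1_compl y2 (N2D y2 N2y2).
have y1_eq_y : y1 = y by apply: N1_incomp N1y1 N1y (le_trans y1y2 y2y).
have y2_eq_y : y2 = y by move: y1y2; rewrite y1_eq_y => /(le_antisym y2y).
by rewrite -y2_eq_y.
Qed.

Lemma finite_complete_not_nullary_infinitary (M : T -> Prop) :
  min_complete D le M -> card_finite M ->
  ~ (has_type D le Nullary \/ has_type D le Infinitary).
Proof.
move=> M_mc M_fin [not_mc | [M' [M'_mc M'_inf]]].
  by apply: not_mc; exists M.
by apply: M'_inf; rewrite (min_complete_unique M'_mc M_mc).
Qed.

End MinimalCompleteSets.

(* [Defs.subrel] is qualified: ssrbool's [subrel] is about boolean relations. *)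
Lemma supset_preorder (T : Type) :
  Relation_Definitions.preorder (T -> T -> Prop)
    (fun R1 R2 => Defs.subrel R2 R1).
Proof.
split; first by move=> R x y.
by move=> R1 R2 R3 R21 R32 x y /R32 /R21.
Qed.

Lemma supset_antisym (T : Type) :
  Relation_Definitions.antisymmetric (T -> T -> Prop)
    (fun R1 R2 => Defs.subrel R2 R1).
Proof.
move=> R1 R2 R21 R12; apply: functional_extensionality => x.
apply: functional_extensionality => y.
by apply: propositional_extensionality; split; [apply: R12 | apply: R21].
Qed.

Section Kernels.

Variables (S : signature) (V : variety S) (F : algebra S).
Variables (m : nat) (E : 'I_m -> algebra S) (h : F -> prod_alg E).

Lemma kernel_antitone (s s' : cand F) :
  sol_le s s' -> Defs.subrel (kernel s') (kernel s).
Proof. by move=> [f [_ f_s']] x y; rewrite /kernel -!f_s' => ->. Qed.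

Lemma Gh_finite_complete (M : cand F -> Prop) :
  min_complete (is_solution V h) (@sol_le S F) M -> card_finite M ->
  exists M', min_complete (Gh V h) (fun R1 R2 => Defs.subrel R2 R1) M' /\
    card_finite M'.
Proof.
move=> [MD [_ M_compl]] [s [_ M_s]].
apply: (min_complete_of_cofinal_list (supset_preorder F) (@supset_antisym F)
  (K := List.map (@kernel S F) s)).
  move=> R /List.in_map_iff [g [<- s_g]].
  by exists g; split=> //; apply/MD/M_s.
move=> R [g [sol_g ->]]; have [g' [Mg' g'g]] := M_compl g sol_g.
by exists (kernel g'); split; [apply/List.in_map/M_s | apply: kernel_antitone].
Qed.

Lemma kernel_greatest_of_unitary (M : cand F -> Prop) (g0 : cand F) :
  min_complete (is_solution V h) (@sol_le S F) M ->
  (forall g, M g <-> g = g0) ->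
  Gh V h (kernel g0) /\ forall R, Gh V h R -> Defs.subrel R (kernel g0).
Proof.
move=> [MD [_ M_compl]] M_g0; have Mg0 : M g0 by apply/M_g0.
split; first by exists g0; split=> //; apply: MD.
move=> R [g [sol_g ->]]; have [g' [/M_g0 -> g0g]] := M_compl g sol_g.
exact: kernel_antitone.
Qed.

End Kernels.

Theorem theorem4p18 (S : signature) (V : variety S) (F : algebra S) (z : F)
  (HF : is_free V (fun _ : unit => z))
  (m : nat) (E : 'I_m -> algebra S) (h : F -> prod_alg E)
  (Hh : egen_problem V h) :
  ((G_type V h Nullary \/ G_type V h Infinitary) ->
     (egen_type V h Infinitary \/ egen_type V h Nullary)) /\
  (G_type V h Finitary -> ~ egen_type V h Unitary).
Proof.
split.
- move=> G_bad.
  case: (classic (exists M, min_complete (is_solution V h) (@sol_le S F) M));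
    last by right.
  move=> [M M_mc].
  case: (classic (card_finite M)) => [M_fin|]; last by left; exists M.
  have [M' [M'_mc M'_fin]] := Gh_finite_complete M_mc M_fin.
  by case: (finite_complete_not_nullary_infinitary (supset_preorder F)
    (@supset_antisym F) M'_mc M'_fin G_bad).
- move=> G_finitary [M [M_mc [g0 M_g0]]].
  have [G_g0 g0_greatest] := kernel_greatest_of_unitary M_mc M_g0.
  exact: (least_not_finitary (supset_preorder F) G_g0 g0_greatest G_finitary).
Qed.
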